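(* Let $m=m_n\le n$ with $n/m=O(1)$, and let $0<q=q_n\le Q=Q_n$ satisfy $Q/q=o(n)$. Then there exists a constant $c_1>0$, not depending on $q,Q,m,n$, such that for all sufficiently large $n$ and every matrix $V\in\mathcal{L}_{m,n}(q,Q)$, \[ \|V^{-1}-S\|\le\frac{c_1Q^2}{q^3mn}, \] where $\|A\|:=\max_{i,j}|a_{i,j}|$ for a matrix $A=(a_{i,j})$.
   Context: $\mathcal{L}_{m,n}(q,Q)$ is the class of real symmetric $(m+n-1)\times(m+n-1)$ matrices $V=(v_{i,j})$ such that: $v_{i,j}=0$ for $i\ne j$ both in $\{1,\dots,m\}$ and for $i\neq j$ both in $\{m+1,\dots,m+n-1\}$; $q\le v_{i,j}=v_{j,i}\le Q$ for $i\in\{1,\dots,m\}$, $j\in\{m+1,\dots,m+n-1\}$; $q\le v_{i,i}-\sum_{j=m+1}^{m+n-1}v_{i,j}\le Q$ for $i=1,\dots,m$; and $v_{i,i}=\sum_{k=1}^m v_{k,i}$ for $i=m+1,\dots,m+n-1$. Put $v_{m+n,m+n}=\sum_{i=1}^m\big(v_{i,i}-\sum_{j=m+1}^{m+n-1}v_{i,j}\big)$. The matrix $S=(s_{i,j})$ of size $(m+n-1)\times(m+n-1)$ is: $s_{i,j}=\frac{\delta_{i,j}}{v_{i,i}}+\frac{1}{v_{m+n,m+n}}$ if $i,j\in\{1,\dots,m\}$ or $i,j\in\{m+1,\dots,m+n-1\}$, and $s_{i,j}=-\frac{1}{v_{m+n,m+n}}$ if one index lies in $\{1,\dots,m\}$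 and the other in $\{m+1,\dots,m+n-1\}$ ($\delta_{i,j}$ the Kronecker delta). *)

From HB Require Import structures.
From mathcomp Require Import all_boot all_order all_algebra.
From mathcomp Require Import reals.
Set Implicit Arguments. Unset Strict Implicit. Unset Printing Implicit Defensive.
Import Order.TTheory GRing.Theory Num.Theory.
Local Open Scope ring_scope.

(* Indices are 0-based: k : 'I_(m+n-1); the paper's index k+1 lies in
   {1..m} iff k < m, and in {m+1..m+n-1} iff m <= k. *)
Section Defs.
Variable R : realType.

Definition inL (m n : nat) (q Q : R) (V : 'M[R]_(m + n - 1)) : Prop :=
  [/\ V^T = V,
      (forall i j : 'I_(m + n - 1), i != j -> (i < m)%N = (j < m)%N -> V i j = 0),
      (forall i j : 'I_(m + n - 1), (i < m)%N -> (m <= j)%N ->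
           q <= V i j /\ V i j <= Q),
      (forall i : 'I_(m + n - 1), (i < m)%N ->
           q <= V i i - \sum_(j : 'I_(m + n - 1) | (m <= j)%N) V i j /\
           V i i - \sum_(j : 'I_(m + n - 1) | (m <= j)%N) V i j <= Q)
    & (forall i : 'I_(m + n - 1), (m <= i)%N ->
           V i i = \sum_(k : 'I_(m + n - 1) | (k < m)%N) V k i)].

(* v_{m+n,m+n} *)
Definition vlast (m n : nat) (V : 'M[R]_(m + n - 1)) : R :=
  \sum_(i : 'I_(m + n - 1) | (i < m)%N)
     (V i i - \sum_(j : 'I_(m + n - 1) | (m <= j)%N) V i j).

Definition Smat (m n : nat) (V : 'M[R]_(m + n - 1)) : 'M[R]_(m + n - 1) :=
  \matrix_(i, j)
    (if (i < m)%N == (j < m)%N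
     then (i == j)%:R / V i i + (vlast V)^-1
     else - (vlast V)^-1).

Definition maxnorm (k l : nat) (A : 'M[R]_(k, l)) : R :=
  \big[Num.max/0]_(i < k) \big[Num.max/0]_(j < l) `|A i j|.
End Defs.

Arguments inL {R} m n q Q V.
Arguments vlast {R} m n V.
Arguments Smat {R} m n V.
Arguments maxnorm {R k l} A.

From HB Require Import structures.
From mathcomp Require Import all_boot all_order all_algebra.
From mathcomp Require Import reals.
From mathcomp Require Import lra ring zify.
Import Order.TTheory GRing.Theory Num.Theory.
Local Open Scope ring_scope.

(* Flipping the sign of the coordinates of the second block turns V into the
   Laplacian of the complete bipartite graph with edge weights v_{i,j},
   grounded at each vertex i of the first block with weight
   v_{i,i} - sum_j v_{i,j}. For such an operator a discrete maximum principle
   holds: comparing the balance equations at the largest and the smallest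
   coordinate on the first block bounds their spread by the data, and the
   grounding-weighted mean of the coordinates, which is read off the data
   directly, locates them. Applied to g = 0 it shows that V is invertible;
   applied column by column to V (V^-1 - S) = I - V S, whose entries are
   explicit and small, it gives the estimate. *)

Lemma ler_pdiv {R : numFieldType} {a b c d : R} :
  0 <= a -> a <= b -> 0 < c -> c <= d -> a / d <= b / c.
Proof.
move=> a0 ab c0 cd; apply: ler_pM => //; first by rewrite invr_ge0 (le_trans (ltW c0)).
by rewrite lef_pV2 ?posrE // (lt_le_trans c0).
Qed.

Lemma weighted_mean_between {R : realFieldType} {I : finType} (P : pred I)
    (w z : I -> R) (lo hi : R) :
  0 < \sum_(i | P i) w i -> (forall i, P i -> 0 <= w i) ->
  (forall i, P i -> lo <= z i <= hi) ->
  lo <= (\sum_(i | P i) w i * z i) / \sum_(i | P i) w i <= hi.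
Proof.
move=> w_gt0 w_ge0 z_in; rewrite ler_pdivlMr // ler_pdivrMr //.
rewrite !mulr_sumr; apply/andP; split; apply: ler_sum => i Pi;
  have /andP[? ?] := z_in i Pi; have := w_ge0 i Pi; nra.
Qed.

Lemma norm_le_spread_add {R : realDomainType} {a b t u : R} :
  b <= u <= a -> b <= t <= a -> `|u| <= a - b + `|t|.
Proof.
move=> /andP[bu ua] /andP[bt ta]; rewrite ler_norml.
have t_le := ler_norm t; have t_ge : - `|t| <= t by rewrite lerNl -normrN ler_norm.
by apply/andP; split; lra.
Qed.

Lemma scaled_extremes_gap {R : realDomainType} {Q ra rb a b t : R} :
  0 <= ra <= Q -> 0 <= rb <= Q -> b <= t <= a -> rb * b - ra * a <= Q * `|t|.
Proof.
move=> /andP[? ?] /andP[? ?] /andP[? ?].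
by case: (lerP 0 t) => t0; [rewrite ger0_norm | rewrite ltr0_norm]; nra.
Qed.

(* The bound of maximum_principle for the data of residual_E_bound,
   residual_s_bound and residual_rho_bound. *)
Lemma residual_bound_arith {R : realFieldType} (q Q mR nR : R) :
  0 < q -> q <= Q -> 0 < mR -> 2 <= nR ->
  (2 * ((Q / q * (Q / (mR * q))) *+ 2) + Q * (Q / (nR * q) / (mR * q))) / (q * (nR - 1))
    + Q / (nR * q) / (mR * q) + Q / (nR * q) / (mR * q)
  <= 11 * Q ^+ 2 / (q ^+ 3 * mR * nR).
Proof.
move=> q_gt0 qQ mR_gt0 nR_ge2.
have Q_gt0 : 0 < Q := lt_le_trans q_gt0 qQ.
have nR_gt0 : 0 < nR by lra.
have nR1_gt0 : 0 < nR - 1 by lra.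
set u := Q ^+ 2 / (q ^+ 3 * mR * nR).
have u_gt0 : 0 < u by rewrite divr_gt0 ?exprn_gt0 // !mulr_gt0 // exprn_gt0.
have -> : (2 * ((Q / q * (Q / (mR * q))) *+ 2) + Q * (Q / (nR * q) / (mR * q)))
            / (q * (nR - 1)) = (4 * nR + 1) / (nR - 1) * u.
  by rewrite /u; field; rewrite !lt0r_neq0.
have -> : Q / (nR * q) / (mR * q) = q / Q * u.
  by rewrite /u; field; rewrite !lt0r_neq0.
rewrite -[X in _ <= X]mulrA -/u -!mulrDl ler_pM2r //.
have : (4 * nR + 1) / (nR - 1) <= 9 by rewrite ler_pdivrMr //; lra.
have : q / Q <= 1 by rewrite ler_pdivrMr // mul1r.
lra.
Qed.

Section BipartiteClass.
Context {R : realType} {m n : nat} {q Q : R} {V : 'M[R]_(m + n - 1)}.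
Hypothesis hV : inL m n q Q V.
Hypotheses (m_gt0 : (0 < m)%N) (n_gt1 : (1 < n)%N) (q_gt0 : 0 < q).

Local Notation N := (m + n - 1)%N.

(* Suffixes A and B refer to the index blocks [i < m] and [m <= i]. *)

Lemma V_sym (i j : 'I_N) : V i j = V j i.
Proof. by case: hV => /matrixP /(_ j i); rewrite mxE. Qed.

Lemma V_AA0 {i j : 'I_N} : i != j -> (i < m)%N -> (j < m)%N -> V i j = 0.
Proof. by case: hV => _ V0 _ _ _ ij im jm; rewrite V0 // im jm. Qed.

Lemma V_BB0 {i j : 'I_N} : i != j -> (m <= i)%N -> (m <= j)%N -> V i j = 0.
Proof. by case: hV => _ V0 _ _ _ ij mi mj; rewrite V0 // ltnNge mi ltnNge mj. Qed.

Lemma V_AB_bounds {i j : 'I_N} : (i < m)%N -> (m <= j)%N -> q <= V i j /\ V i j <= Q.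
Proof. by case: hV => _ _ VAB _ _; apply: VAB. Qed.

Lemma V_AB_ge0 {i j : 'I_N} : (i < m)%N -> (m <= j)%N -> 0 <= V i j.
Proof. by move=> im mj; have [qV _] := V_AB_bounds im mj; apply: le_trans qV; apply: ltW. Qed.

Definition excess (i : 'I_N) := V i i - \sum_(j : 'I_N | (m <= j)%N) V i j.

Lemma excess_bounds {i : 'I_N} : (i < m)%N -> q <= excess i /\ excess i <= Q.
Proof. by case: hV => _ _ _ exc _; apply: exc. Qed.

Lemma excess_ge0 {i : 'I_N} : (i < m)%N -> 0 <= excess i.
Proof. by move=> im; have [qe _] := excess_bounds im; apply: le_trans qe; apply: ltW. Qed.

Lemma V_B_diagE {i : 'I_N} : (m <= i)%N -> V i i = \sum_(k : 'I_N | (k < m)%N) V k i.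
Proof. by case: hV => _ _ _ _ diag; apply: diag. Qed.

Lemma vlastE : vlast m n V = \sum_(k : 'I_N | (k < m)%N) excess k.
Proof. by []. Qed.

Lemma big_blocks (F : 'I_N -> R) :
  \sum_k F k = \sum_(k : 'I_N | (k < m)%N) F k + \sum_(k : 'I_N | (m <= k)%N) F k.
Proof.
rewrite (bigID (fun k : 'I_N => (k < m)%N)) /=; congr (_ + _).
by apply: eq_bigl => k; rewrite -leqNgt.
Qed.

Lemma mulmx_row_A (f : 'I_N -> R) (i : 'I_N) : (i < m)%N ->
  \sum_k V i k * f k = V i i * f i + \sum_(l : 'I_N | (m <= l)%N) V i l * f l.
Proof.
move=> im; rewrite big_blocks (bigD1 i) //= big1 ?addr0 // => k /andP[km ki].
by rewrite V_AA0 ?mul0r // eq_sym.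
Qed.

Lemma mulmx_row_B (f : 'I_N -> R) (i : 'I_N) : (m <= i)%N ->
  \sum_k V i k * f k = \sum_(k : 'I_N | (k < m)%N) V k i * f k + V i i * f i.
Proof.
move=> mi; rewrite big_blocks [X in _ + X](bigD1 i) //= [X in _ + (_ + X)]big1.
  by rewrite addr0; congr (_ + _); apply: eq_bigr => k _; rewrite V_sym.
by move=> k /andP[mk ki]; rewrite V_BB0 ?mul0r // eq_sym.
Qed.

Lemma sum_A_const (c : R) : \sum_(k : 'I_N | (k < m)%N) c = c * m%:R.
Proof.
have mN : (m <= N)%N by lia.
rewrite -(big_ord_widen_cond _ xpredT (fun _ => c) mN) /=.
by rewrite sumr_const card_ord mulr_natr.
Qed.

Lemma sum_B_const (c : R) : \sum_(k : 'I_N | (m <= k)%N) c = c * (n - 1)%:R.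
Proof.
have := big_blocks (fun _ => c); rewrite sumr_const card_ord sum_A_const.
have -> : c *+ N = c * m%:R + c * (n - 1)%:R.
  by rewrite -mulrDr -natrD mulr_natr; congr (c *+ _); lia.
by move=> /addrI.
Qed.

Lemma V_A_diag_ge {k : 'I_N} : (k < m)%N -> n%:R * q <= V k k.
Proof.
move=> km; have [qe _] := excess_bounds km.
have : (n - 1)%:R * q <= \sum_(l : 'I_N | (m <= l)%N) V k l.
  by rewrite mulrC -sum_B_const; apply: ler_sum => l ml; case: (V_AB_bounds km ml).
rewrite /excess in qe; have -> : n%:R = (n - 1)%:R + 1 :> R by rewrite natr1; congr _%:R; lia.
lra.
Qed.

Lemma V_B_diag_ge {l : 'I_N} : (m <= l)%N -> m%:R * q <= V l l.
Proof.
move=> ml; rewrite V_B_diagE // mulrC -sum_A_const.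
by apply: ler_sum => k km; case: (V_AB_bounds km ml).
Qed.

Lemma vlast_ge : m%:R * q <= vlast m n V.
Proof. by rewrite vlastE mulrC -sum_A_const; apply: ler_sum => k km; case: (excess_bounds km). Qed.

Lemma mq_gt0 : 0 < m%:R * q.
Proof. by rewrite mulr_gt0 ?ltr0n. Qed.

Lemma nq_gt0 : 0 < n%:R * q.
Proof. by rewrite mulr_gt0 ?ltr0n //; lia. Qed.

Lemma V_A_diag_gt0 {k : 'I_N} : (k < m)%N -> 0 < V k k.
Proof. by move=> km; apply: lt_le_trans nq_gt0 (V_A_diag_ge km). Qed.

Lemma V_B_diag_gt0 {l : 'I_N} : (m <= l)%N -> 0 < V l l.
Proof. by move=> ml; apply: lt_le_trans mq_gt0 (V_B_diag_ge ml). Qed.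

Lemma vlast_gt0 : 0 < vlast m n V.
Proof. exact: lt_le_trans mq_gt0 vlast_ge. Qed.

Lemma q_le_Q : q <= Q.
Proof.
have N_gt0 : (0 < N)%N by lia.
by have [qe eQ] := excess_bounds (m_gt0 : (Ordinal N_gt0 < m)%N); apply: le_trans qe eQ.
Qed.

Lemma Q_ge0 : 0 <= Q.
Proof. exact: le_trans (ltW q_gt0) q_le_Q. Qed.

Definition sgn (i : 'I_N) : R := if (i < m)%N then 1 else -1.

Lemma sgn_A {i : 'I_N} : (i < m)%N -> sgn i = 1.
Proof. by rewrite /sgn => ->. Qed.

Lemma sgn_B {i : 'I_N} : (m <= i)%N -> sgn i = -1.
Proof. by rewrite /sgn ltnNge => ->. Qed.

Section MaximumPrinciple.
Variables (x g : 'I_N -> R) (E s rho : R).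
Hypothesis Vx : forall i, \sum_k V i k * x k = g i.
Hypothesis E_bound : forall k : 'I_N, (k < m)%N ->
  `|g k - \sum_(l : 'I_N | (m <= l)%N) V k l * g l / V l l| <= E.
Hypothesis s_bound :
  `|\sum_(k : 'I_N | (k < m)%N) g k - \sum_(l : 'I_N | (m <= l)%N) g l| <= s.
Hypothesis rho_bound : forall l : 'I_N, (m <= l)%N -> `|g l| <= rho * V l l.
Hypothesis rho_ge0 : 0 <= rho.

Let y i := sgn i * x i.
Let mean l := (\sum_(k : 'I_N | (k < m)%N) V k l * y k) / V l l.
(* the excess-weighted mean of y over the first block, by excess_weighted_sum *)
Let level := (\sum_(k : 'I_N | (k < m)%N) g k - \sum_(l : 'I_N | (m <= l)%N) g l)
               / vlast m n V.

Lemma laplacian_A {k : 'I_N} : (k < m)%N ->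
  g k = excess k * y k + \sum_(l : 'I_N | (m <= l)%N) V k l * (y k - y l).
Proof.
move=> km; rewrite -Vx mulmx_row_A // /excess /y sgn_A // mul1r mulrBl.
rewrite mulr_suml -addrA [X in _ = _ + X]addrC -sumrB; congr (_ + _).
by apply: eq_bigr => l ml; rewrite sgn_B //; ring.
Qed.

Lemma laplacian_B {l : 'I_N} : (m <= l)%N ->
  g l = \sum_(k : 'I_N | (k < m)%N) V k l * (y k - y l).
Proof.
move=> ml; rewrite -Vx mulmx_row_B // (V_B_diagE ml) mulr_suml -big_split /=.
by apply: eq_bigr => k km; rewrite /y sgn_A // sgn_B //; ring.
Qed.

Lemma y_B {l : 'I_N} : (m <= l)%N -> y l = mean l - g l / V l l.
Proof.
move=> ml; have Vl0 : V l l != 0 by rewrite gt_eqF ?V_B_diag_gt0.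
rewrite (laplacian_B ml) /mean -mulrBl -sumrB.
under eq_bigr do rewrite mulrBr subKr.
by rewrite -mulr_suml -V_B_diagE // mulrC mulKf.
Qed.

Lemma excess_balance {k : 'I_N} : (k < m)%N ->
  excess k * y k + \sum_(l : 'I_N | (m <= l)%N) V k l * (y k - mean l)
  = g k - \sum_(l : 'I_N | (m <= l)%N) V k l * g l / V l l.
Proof.
move=> km; rewrite (laplacian_A km) -addrA; congr (_ + _); rewrite -sumrB.
apply: eq_bigr => l ml; rewrite (y_B ml) -mulrA -mulrBr; congr (_ * _); lra.
Qed.

Lemma excess_weighted_sum :
  \sum_(k : 'I_N | (k < m)%N) excess k * y k
  = \sum_(k : 'I_N | (k < m)%N) g k - \sum_(l : 'I_N | (m <= l)%N) g l.
Proof.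
under [X in _ = X - _]eq_bigr => k km do rewrite (laplacian_A km).
under [X in _ = _ - X]eq_bigr => l ml do rewrite (laplacian_B ml).
by rewrite big_split /= [X in _ - X]exchange_big addrK.
Qed.

Section Extremes.
Context {ka kb : 'I_N}.
Hypotheses (ka_m : (ka < m)%N) (kb_m : (kb < m)%N).
Hypothesis y_ext : forall k : 'I_N, (k < m)%N -> y kb <= y k <= y ka.

Lemma mean_between {l : 'I_N} : (m <= l)%N -> y kb <= mean l <= y ka.
Proof.
move=> ml; rewrite /mean (V_B_diagE ml); apply: weighted_mean_between => //.
- by rewrite -V_B_diagE // V_B_diag_gt0.
- by move=> k km; apply: V_AB_ge0.
Qed.

Lemma level_between : y kb <= level <= y ka.
Proof.
rewrite /level -excess_weighted_sum vlastE; apply: weighted_mean_between => //.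
- by rewrite -vlastE vlast_gt0.
- by move=> k km; apply: excess_ge0.
Qed.

Lemma level_norm : `|level| <= s / (m%:R * q).
Proof.
rewrite /level normrM normfV (gtr0_norm vlast_gt0).
by apply: ler_pdiv => //; [exact: mq_gt0 | exact: vlast_ge].
Qed.

Lemma spread_le :
  y ka - y kb <= (2 * E + Q * (s / (m%:R * q))) / (q * (n - 1)%:R).
Proof.
set a := y ka; set b := y kb.
set S1 := \sum_(l : 'I_N | (m <= l)%N) (a - mean l).
set S2 := \sum_(l : 'I_N | (m <= l)%N) (b - mean l).
have top : excess ka * a + q * S1 <= E.
  have := E_bound ka ka_m; rewrite -(excess_balance ka_m) => /(le_trans (ler_norm _)).
  apply: le_trans; rewrite lerD2l /S1 mulr_sumr; apply: ler_sum => l ml.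
  have [qV _] := V_AB_bounds ka_m ml; have /andP[_ ma] := mean_between ml.
  by apply: ler_wpM2r; rewrite ?subr_ge0.
have bottom : - E <= excess kb * b + q * S2.
  have := E_bound kb kb_m; rewrite -(excess_balance kb_m) ler_norml => /andP[lo _].
  apply: le_trans lo _; rewrite lerD2l /S2 mulr_sumr; apply: ler_sum => l ml.
  have [qV _] := V_AB_bounds kb_m ml; have /andP[bm _] := mean_between ml.
  by apply: ler_wnM2r; rewrite ?subr_le0.
have S12 : q * S1 - q * S2 = (a - b) * (q * (n - 1)%:R).
  rewrite -mulrBr /S1 /S2 -sumrB -[RHS]mulrCA -sum_B_const; congr (_ * _).
  by apply: eq_bigr => l _; lra.
have [_ eaQ] := excess_bounds ka_m; have [_ ebQ] := excess_bounds kb_m.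
have gap : excess kb * b - excess ka * a <= Q * (s / (m%:R * q)).
  apply: le_trans (scaled_extremes_gap (Q := Q) _ _ level_between) _.
  - by rewrite excess_ge0 // eaQ.
  - by rewrite excess_ge0 // ebQ.
  - exact: ler_wpM2l Q_ge0 _ _ level_norm.
rewrite ler_pdivlMr; first lra.
by rewrite mulr_gt0 // ltr0n; lia.
Qed.

End Extremes.

Lemma maximum_principle (i : 'I_N) :
  `|x i| <= (2 * E + Q * (s / (m%:R * q))) / (q * (n - 1)%:R) + s / (m%:R * q) + rho.
Proof.
have N_gt0 : (0 < N)%N by lia.
have A_i0 : Ordinal N_gt0 \in [pred k : 'I_N | (k < m)%N] by exact: m_gt0.
case: (arg_maxP y A_i0) => ka ka_m ka_max; case: (arg_minP y A_i0) => kb kb_m kb_min.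
have y_ext (k : 'I_N) : (k < m)%N -> y kb <= y k <= y ka.
  by move=> km; apply/andP; split; [exact: kb_min | exact: ka_max].
have spread_bound (u : R) : y kb <= u <= y ka ->
    `|u| <= (2 * E + Q * (s / (m%:R * q))) / (q * (n - 1)%:R) + s / (m%:R * q).
  move=> /norm_le_spread_add /(_ (level_between y_ext)) /le_trans; apply.
  exact: lerD (spread_le ka_m kb_m y_ext) level_norm.
have -> : `|x i| = `|y i| by rewrite /y normrM /sgn; case: ifP; rewrite ?normrN normr1 mul1r.
case: (ltnP i m) => [im | mi].
  by apply: le_trans (spread_bound _ (y_ext i im)) _; rewrite lerDl.
have g_rho : `|g i / V i i| <= rho.
  by rewrite normrM normfV (gtr0_norm (V_B_diag_gt0 mi)) ler_pdivrMr ?V_B_diag_gt0 ?rho_bound.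
rewrite (y_B mi); apply: le_trans (ler_normB _ _) _.
exact: lerD (spread_bound _ (mean_between y_ext mi)) g_rho.
Qed.

End MaximumPrinciple.

Lemma unitmx_V : V \in unitmx.
Proof.
rewrite unitmxE unitfE; apply/negP => /det0P[v v_neq0 vV0].
apply/negP: v_neq0; rewrite negbK; apply/eqP/rowP => i; rewrite mxE.
apply/eqP; rewrite -normr_le0.
apply: le_trans (maximum_principle (fun k => v 0 k) (fun _ => 0) 0 0 0 _ _ _ _ _ i) _.
- move=> i'; move/matrixP: vV0 => /(_ 0 i'); rewrite !mxE /= => vV0.
  by rewrite -[X in _ = X]vV0; apply: eq_bigr => k _; rewrite V_sym mulrC.
- by move=> k _; rewrite big1 ?subr0 ?normr0 // => l _; rewrite mulr0 mul0r.
- by rewrite !big1 // subr0 normr0.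
- by move=> l _; rewrite normr0 mul0r.
- by [].
- by rewrite !(mulr0, mul0r, add0r, addr0).
Qed.

Lemma Smat_sgnE (i j : 'I_N) :
  Smat m n V i j = (i == j)%:R / V i i + sgn i * sgn j / vlast m n V.
Proof.
rewrite /Smat mxE /sgn; case: (ltnP i m) => im; case: (ltnP j m) => jm /=.
- by rewrite !mul1r.
- rewrite (_ : i == j = false) ?mul0r ?add0r ?mul1r ?mulN1r //.
  by apply/negbTE; apply: contraTneq im => ->; rewrite -leqNgt.
- rewrite (_ : i == j = false) ?mul0r ?add0r ?mulN1r ?mul1r //.
  by apply/negbTE; apply: contraTneq jm => <-; rewrite -leqNgt.
- by rewrite mulN1r opprK mul1r.
Qed.

Lemma mulmx_sgn (i : 'I_N) : \sum_k V i k * sgn k = (i < m)%:R * excess i.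
Proof.
case: (ltnP i m) => im.
  rewrite mulmx_row_A // sgn_A // mulr1 mul1r /excess -sumrN.
  by congr (_ + _); apply: eq_bigr => l ml; rewrite sgn_B // mulrN1.
rewrite mulmx_row_B // sgn_B // mulrN1 (V_B_diagE im) mul0r.
by rewrite (eq_bigr (fun k => V k i)) ?subrr // => k km; rewrite sgn_A // mulr1.
Qed.

Lemma mulmx_V_Smat (i j : 'I_N) :
  (V *m Smat m n V) i j = V i j / V j j + sgn j * ((i < m)%:R * excess i) / vlast m n V.
Proof.
rewrite mxE (eq_bigr (fun k => V i k * (k == j)%:R / V k k
                              + V i k * sgn k * (sgn j / vlast m n V))); last first.
  by move=> k _; rewrite Smat_sgnE mulrDr !mulrA.
rewrite big_split /= -mulr_suml mulmx_sgn (bigD1 j) //= big1 ?addr0.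
  by rewrite eqxx mulr1 mulrCA mulrA.
by move=> k /negbTE ->; rewrite mulr0 mul0r.
Qed.

Local Notation G := (1%:M - V *m Smat m n V).

Lemma same_block_ratio (i j : 'I_N) : (i < m)%N = (j < m)%N ->
  (i == j)%:R - V i j / V j j = 0.
Proof.
move=> ij; case: (eqVneq i j) => [-> | neq_ij].
  rewrite divff ?subrr // gt_eqF //.
  by case: (ltnP j m) => jm; [apply: V_A_diag_gt0 | apply: V_B_diag_gt0].
case: (ltnP i m) ij => im /esym jm.
  by rewrite (V_AA0 neq_ij) ?mul0r ?subrr.
by rewrite (V_BB0 neq_ij) ?mul0r ?subrr // leqNgt jm.
Qed.

Lemma residual_A {i : 'I_N} (j : 'I_N) : (i < m)%N ->
  G i j = (i == j)%:R - V i j / V j j - sgn j * excess i / vlast m n V.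
Proof.
by move=> im; have := mulmx_V_Smat i j; rewrite !mxE => ->; rewrite im mul1r opprD addrA.
Qed.

Lemma residual_B {i : 'I_N} (j : 'I_N) : (m <= i)%N ->
  G i j = (i == j)%:R - V i j / V j j.
Proof.
move=> mi; have := mulmx_V_Smat i j; rewrite !mxE => ->.
by rewrite ltnNge mi /= mul0r mulr0 mul0r addr0.
Qed.

Lemma residual_AA {k j : 'I_N} : (k < m)%N -> (j < m)%N ->
  G k j = - (excess k / vlast m n V).
Proof. by move=> km jm; rewrite residual_A // same_block_ratio ?km ?jm // sgn_A // mul1r sub0r. Qed.

Lemma residual_AB {k j : 'I_N} : (k < m)%N -> (m <= j)%N ->
  G k j = excess k / vlast m n V - V k j / V j j.
Proof.
move=> km mj; rewrite residual_A // sgn_B // mulN1r mulNr opprK.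
rewrite (_ : k == j = false) ?sub0r 1?addrC //.
by apply/negbTE; apply: contraTneq km => ->; rewrite -leqNgt.
Qed.

Lemma residual_BA {l j : 'I_N} : (m <= l)%N -> (j < m)%N -> G l j = - (V l j / V j j).
Proof.
move=> ml jm; rewrite residual_B // (_ : l == j = false) ?sub0r //.
by apply/negbTE; apply: contraTneq jm => <-; rewrite -leqNgt.
Qed.

Lemma residual_BB {l j : 'I_N} : (m <= l)%N -> (m <= j)%N -> G l j = 0.
Proof. by move=> ml mj; rewrite residual_B // same_block_ratio // !ltnNge ml mj. Qed.

Lemma excess_vlast_le {k : 'I_N} : (k < m)%N ->
  0 <= excess k / vlast m n V <= Q / (m%:R * q).
Proof.
move=> km; have [_ eQ] := excess_bounds km.
apply/andP; split; first exact: divr_ge0 (excess_ge0 km) (ltW vlast_gt0).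
exact: ler_pdiv (excess_ge0 km) eQ mq_gt0 vlast_ge.
Qed.

Lemma ratio_AB_le {k j : 'I_N} : (k < m)%N -> (m <= j)%N ->
  0 <= V k j / V j j <= Q / (m%:R * q).
Proof.
move=> km mj; have [_ VQ] := V_AB_bounds km mj.
apply/andP; split; first exact: divr_ge0 (V_AB_ge0 km mj) (ltW (V_B_diag_gt0 mj)).
exact: ler_pdiv (V_AB_ge0 km mj) VQ mq_gt0 (V_B_diag_ge mj).
Qed.

Lemma ratio_BA_le {l j : 'I_N} : (m <= l)%N -> (j < m)%N ->
  0 <= V l j / V j j <= Q / (n%:R * q).
Proof.
move=> ml jm; have [_ VQ] := V_AB_bounds jm ml; rewrite V_sym.
apply/andP; split; first exact: divr_ge0 (V_AB_ge0 jm ml) (ltW (V_A_diag_gt0 jm)).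
exact: ler_pdiv (V_AB_ge0 jm ml) VQ nq_gt0 (V_A_diag_ge jm).
Qed.

Lemma transported_ratio_le {j k : 'I_N} : (k < m)%N -> (j < m)%N ->
  0 <= \sum_(l : 'I_N | (m <= l)%N) V k l * (V l j / V j j) / V l l
    <= Q / q * (Q / (m%:R * q)).
Proof.
move=> km jm; have n_gt0 : 0 < n%:R :> R by rewrite ltr0n; lia.
have term_le (l : 'I_N) : (m <= l)%N ->
    0 <= V k l * (V l j / V j j) / V l l <= Q * (Q / (n%:R * q)) / (m%:R * q).
  move=> ml; have [_ VQ] := V_AB_bounds km ml; have /andP[r0 rQ] := ratio_BA_le ml jm.
  have num_ge0 := mulr_ge0 (V_AB_ge0 km ml) r0.
  apply/andP; split; first exact: divr_ge0 num_ge0 (ltW (V_B_diag_gt0 ml)).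
  exact: ler_pdiv num_ge0 (ler_pM (V_AB_ge0 km ml) r0 VQ rQ) mq_gt0 (V_B_diag_ge ml).
apply/andP; split; first by apply: sumr_ge0 => l /term_le /andP[].
apply: le_trans (_ : \sum_(l : 'I_N | (m <= l)%N) Q * (Q / (n%:R * q)) / (m%:R * q) <= _).
  by apply: ler_sum => l /term_le /andP[].
rewrite sum_B_const.
have -> : Q * (Q / (n%:R * q)) / (m%:R * q) * (n - 1)%:R
        = (n - 1)%:R / n%:R * (Q / q * (Q / (m%:R * q))).
  by field; rewrite (gt_eqF n_gt0) (gt_eqF q_gt0) pnatr_eq0 -lt0n m_gt0.
apply: ler_piMl; first exact: mulr_ge0 (divr_ge0 Q_ge0 (ltW q_gt0)) (divr_ge0 Q_ge0 (ltW mq_gt0)).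
by rewrite (ler_pdivrMr _ _ n_gt0) mul1r ler_nat; lia.
Qed.

Lemma residual_E_bound (j k : 'I_N) : (k < m)%N ->
  `|G k j - \sum_(l : 'I_N | (m <= l)%N) V k l * G l j / V l l|
    <= (Q / q * (Q / (m%:R * q))) *+ 2.
Proof.
move=> km; have Qmq_le : Q / (m%:R * q) <= Q / q * (Q / (m%:R * q)).
  apply: ler_peMl; first exact: divr_ge0 Q_ge0 (ltW mq_gt0).
  by rewrite ler_pdivlMr // mul1r q_le_Q.
have /andP[e_ge0 e_le] := excess_vlast_le km.
rewrite mulr2n; case: (ltnP j m) => jm.
  rewrite residual_AA //.
  under eq_bigr => l ml do rewrite residual_BA // mulrN mulNr.
  have /andP[t_ge0 t_le] := transported_ratio_le km jm.
  rewrite sumrN opprK; apply: le_trans (ler_normD _ _) (lerD _ _).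
    by rewrite normrN ger0_norm //; apply: le_trans e_le Qmq_le.
  by rewrite ger0_norm.
rewrite residual_AB // big1 => [|l ml]; last by rewrite residual_BB // mulr0 mul0r.
have /andP[r0 rQ] := ratio_AB_le km jm.
rewrite subr0; apply: le_trans (ler_normB _ _) (lerD _ _); rewrite ger0_norm //.
  exact: le_trans e_le Qmq_le.
exact: le_trans rQ Qmq_le.
Qed.

Lemma residual_s_bound (j : 'I_N) :
  `|\sum_(k : 'I_N | (k < m)%N) G k j - \sum_(l : 'I_N | (m <= l)%N) G l j|
    <= Q / (n%:R * q).
Proof.
case: (ltnP j m) => jm.
  have Vjj_neq0 := lt0r_neq0 (V_A_diag_gt0 jm).
  under eq_bigr => k km do rewrite residual_AA //.
  under [X in _ - X]eq_bigr => l ml do rewrite residual_BA // V_sym.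
  rewrite !sumrN -!mulr_suml -vlastE (divff (lt0r_neq0 vlast_gt0)) opprK.
  have -> : -1 + (\sum_(l : 'I_N | (m <= l)%N) V j l) / V j j = - (excess j / V j j).
    by rewrite /excess; field.
  have [_ eQ] := excess_bounds jm.
  rewrite normrN ger0_norm; last exact: divr_ge0 (excess_ge0 jm) (ltW (V_A_diag_gt0 jm)).
  exact: ler_pdiv (excess_ge0 jm) eQ nq_gt0 (V_A_diag_ge jm).
under eq_bigr => k km do rewrite residual_AB //.
rewrite [X in _ - X]big1 => [|l ml]; last by rewrite residual_BB.
rewrite subr0 sumrB -!mulr_suml -vlastE -(V_B_diagE jm).
rewrite (divff (lt0r_neq0 vlast_gt0)) (divff (lt0r_neq0 (V_B_diag_gt0 jm))) subrr normr0.
exact: divr_ge0 Q_ge0 (ltW nq_gt0).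
Qed.

Lemma residual_rho_bound (j l : 'I_N) : (m <= l)%N ->
  `|G l j| <= Q / (n%:R * q) / (m%:R * q) * V l l.
Proof.
move=> ml; have Qnq_ge0 := divr_ge0 Q_ge0 (ltW nq_gt0).
case: (ltnP j m) => jm; last first.
  rewrite residual_BB // normr0; apply: mulr_ge0 (ltW (V_B_diag_gt0 ml)).
  exact: divr_ge0 Qnq_ge0 (ltW mq_gt0).
have /andP[r0 rQ] := ratio_BA_le ml jm.
rewrite residual_BA // normrN ger0_norm //; apply: le_trans rQ _.
rewrite -mulrA [_^-1 * _]mulrC; apply: ler_peMr Qnq_ge0 _.
by rewrite ler_pdivlMr ?mq_gt0 // mul1r V_B_diag_ge.
Qed.

Lemma inverse_minus_Smat_le (i j : 'I_N) :
  `|(invmx V - Smat m n V) i j| <= 11 * Q ^+ 2 / (q ^+ 3 * m%:R * n%:R).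
Proof.
have VG : V *m (invmx V - Smat m n V) = G by rewrite mulmxBr mulmxV ?unitmx_V.
apply: le_trans (maximum_principle (fun k => (invmx V - Smat m n V) k j) (fun k => G k j)
  ((Q / q * (Q / (m%:R * q))) *+ 2) (Q / (n%:R * q)) (Q / (n%:R * q) / (m%:R * q))
  _ _ _ _ _ i) _.
- by move=> k; rewrite -VG mxE.
- exact: residual_E_bound.
- exact: residual_s_bound.
- exact: residual_rho_bound.
- exact: divr_ge0 (divr_ge0 Q_ge0 (ltW nq_gt0)) (ltW mq_gt0).
rewrite natrB ?(ltnW n_gt1) //; apply: residual_bound_arith q_gt0 q_le_Q _ _.
  by rewrite ltr0n.
by rewrite ler_nat.
Qed.

End BipartiteClass.

Theorem lemma1 (R : realType) (m : nat -> nat) (q Q : nat -> R) :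
  (forall n, (m n <= n)%N) ->
  (* n / m_n = O(1) *)
  (exists (C : R) (N : nat), forall n, (N <= n)%N -> n%:R <= C * (m n)%:R) ->
  (forall n, 0 < q n /\ q n <= Q n) ->
  (* Q_n / q_n = o(n) *)
  (forall eps : R, 0 < eps ->
     exists N : nat, forall n, (N <= n)%N -> Q n / q n <= eps * n%:R) ->
  exists c1 : R, 0 < c1 /\
    exists N : nat, forall n, (N <= n)%N ->
      forall V : 'M[R]_(m n + n - 1), inL (m n) n (q n) (Q n) V ->
        maxnorm (invmx V - Smat (m n) n V) <=
          c1 * Q n ^+ 2 / (q n ^+ 3 * (m n)%:R * n%:R).
Proof.
move=> _ [C [N0 n_le_Cm]] qQ _.
exists 11; split; first by rewrite ltr0n.
exists (maxn N0 2) => n; rewrite geq_max => /andP[N0_le_n n_gt1] V hV.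
have m_gt0 : (0 < m n)%N.
  rewrite lt0n; apply/eqP => m0; have := n_le_Cm n N0_le_n.
  by rewrite m0 mulr0 leNgt ltr0n (ltnW n_gt1).
have [q_gt0 _] := qQ n.
have bound := inverse_minus_Smat_le hV m_gt0 n_gt1 q_gt0.
have N_gt0 : (0 < m n + n - 1)%N by lia.
have bound_ge0 := le_trans (normr_ge0 _) (bound (Ordinal N_gt0) (Ordinal N_gt0)).
by apply: bigmax_le => // i _; apply: bigmax_le => // j _.
Qed.
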